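(* Let $K\ge2$ and $\alpha\in\mathbb{R}$, and define \[ C_{\alpha,K}:=2\cdot\inf\left\{\frac{D_\alpha(p\Vert q)}{\|p-q\|_1^2}: p,q\in\operatorname{relint}(\Delta^K),\ p\ne q\right\}. \] Then \[ C_{\alpha,K}=\inf\left\{\sum_{k=1}^K v_k^2\gamma_k^{\alpha-2}: v\in T^K,\ \gamma\in\operatorname{relint}(\Delta^K)\right\}, \] where $T^K:=\{v\in\mathbb{R}^K:\|v\|_1=1,\ \sum_{k=1}^K v_k=0\}$.
   Context: $\Delta^K=\{p\in[0,1]^K:\sum_k p_k=1\}$, $\operatorname{relint}(\Delta^K)=\Delta^K\cap(0,1)^K$. For $p\in(0,+\infty)^K$: $S_\alpha(p)=\frac{\sum_k p_k^\alpha}{\alpha(1-\alpha)}$ if $\alpha\notin\{0,1\}$, $S_0(p)=\sum_k\ln p_k$, $S_1(p)=-\sum_k p_k\ln p_k$. $D_\alpha(p\Vert q)=-S_\alpha(p)+S_\alpha(q)+\langle\nabla S_\alpha(q),p-q\rangle$ is the Bregman divergence of $-S_\alpha$ on $(0,+\infty)^K$. $\|x\|_1=\sum_k|x_k|$. *)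

From HB Require Import structures.
From mathcomp Require Import all_boot all_order all_algebra.
From mathcomp Require Import all_classical all_reals all_analysis.
Set Implicit Arguments. Unset Strict Implicit. Unset Printing Implicit Defensive.
Import Order.TTheory GRing.Theory Num.Theory.
Import numFieldNormedType.Exports.
Local Open Scope classical_set_scope.
Local Open Scope ring_scope.

Definition Salpha (R : realType) (K : nat) (alpha : R) (p : 'I_K -> R) : R :=
  if alpha == 0 then \sum_(k < K) ln (p k)
  else if alpha == 1 then - \sum_(k < K) p k * ln (p k)
  else (\sum_(k < K) p k `^ alpha) / (alpha * (1 - alpha)).

Definition gradS (R : realType) (K : nat) (alpha : R) (q : 'I_K -> R) (k : 'I_K) : R :=
  derive1 (fun t : R => Salpha alpha (fun j => if j == k then q j + t else q j)) 0.

(* Bregman divergence of -S_alpha *)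
Definition Dalpha (R : realType) (K : nat) (alpha : R) (p q : 'I_K -> R) : R :=
  - Salpha alpha p + Salpha alpha q + \sum_(k < K) gradS alpha q k * (p k - q k).

Definition relint_simplex (R : realType) (K : nat) (p : 'I_K -> R) : Prop :=
  (forall k, 0 <= p k <= 1) /\ \sum_(k < K) p k = 1 /\ (forall k, 0 < p k < 1).

Definition norm1 (R : realType) (K : nat) (x : 'I_K -> R) : R := \sum_(k < K) `|x k|.

Definition TK (R : realType) (K : nat) (v : 'I_K -> R) : Prop :=
  norm1 v = 1 /\ \sum_(k < K) v k = 0.

Definition C_alpha (R : realType) (K : nat) (alpha : R) : \bar R :=
  (2%:E * ereal_inf [set x : \bar R | exists p q : 'I_K -> R,
     [/\ relint_simplex p, relint_simplex q, p <> q &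
       x = (Dalpha alpha p q / (norm1 (fun k => p k - q k)) ^+ 2)%:E]])%E.

From HB Require Import structures.
From mathcomp Require Import all_boot all_order all_algebra.
From mathcomp Require Import all_classical all_reals all_analysis.
From mathcomp Require Import ring lra.
Set Implicit Arguments. Unset Strict Implicit. Unset Printing Implicit Defensive.
Import Order.TTheory GRing.Theory Num.Theory.
Import numFieldNormedType.Exports.
Local Open Scope classical_set_scope.
Local Open Scope ring_scope.

(* The divergence is a second-order Taylor remainder.  Write p = q + s v with
   s = |p - q|_1, so that v = (p - q) / s lies in T^K, and let
   G t = - S_alpha (q + t v).  Then
     D_alpha (p || q) = G s - G 0 - G' 0 * s,
     G'' t = \sum_k v_k^2 (q_k + t v_k)^(alpha - 2),
   the right-hand quantity at the point q + t v of the segment, which stays in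
   the relative interior of the simplex.  Bounding G'' from below by the
   infimum gives 2 D_alpha (p || q) >= inf * s^2.  Conversely, for fixed v and
   gamma, G'' is continuous at 0, so on a short enough segment starting at
   gamma it exceeds its value at gamma by at most eps, whence
   2 D_alpha (gamma + s v || gamma) / s^2 <= \sum_k v_k^2 gamma_k^(alpha - 2) + eps. *)

Section Taylor.
Variable R : realType.

Lemma is_derive_continuous (f : R -> R) (x df : R) :
  is_derive x 1 f df -> {for x, continuous f}.
Proof. by move=> [fd _]; exact/differentiable_continuous/derivable1_diffP. Qed.

Lemma is_derive_affine (a b t : R) : is_derive t 1 (fun t => a + t * b) b.
Proof.
have -> : (fun t => a + t * b) = cst a + b \*: (@id R).
  by apply/funext => y; rewrite /= /GRing.scale /= mulrC.
by apply: is_derive_eq; rewrite add0r -[_ *: _]/(b * 1) mulr1.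
Qed.

Lemma is_derive_ge0_ndecr (f f' : R -> R) (a b : R) :
  (forall t, a <= t <= b -> is_derive t 1 f (f' t)) ->
  (forall t, a <= t <= b -> 0 <= f' t) ->
  forall x y, a <= x -> x <= y -> y <= b -> f x <= f y.
Proof.
move=> df f'ge0; apply: ger0_derive1_ndecr.
- move=> x; rewrite in_itv /= => /andP[ax xb].
  by case: (df x); rewrite ?ltW.
- move=> x; rewrite in_itv /= => /andP[ax xb].
  have xab : a <= x <= b by rewrite !ltW.
  by rewrite derive1E; have [_ ->] := df x xab; exact: f'ge0.
- apply: continuous_in_subspaceT => x; rewrite inE /= in_itv /= => xab.
  exact: is_derive_continuous (df x xab).
Qed.

Lemma taylor2_ge (G G1 G2 : R -> R) (a b m : R) : a <= b ->
  (forall t, a <= t <= b -> is_derive t 1 G (G1 t)) ->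
  (forall t, a <= t <= b -> is_derive t 1 G1 (G2 t)) ->
  (forall t, a <= t <= b -> m <= G2 t) ->
  m * (b - a) ^+ 2 / 2 <= G b - G a - G1 a * (b - a).
Proof.
move=> ab dG dG1 mG2.
(* [H1] and then [H] increase from [0] at [a]: [H1' = G2 - m >= 0], [H' = H1]. *)
pose H1 t := G1 t - G1 a - m * (t - a).
have dH1 t : a <= t <= b -> is_derive t 1 H1 (G2 t - m).
  move=> tab; have dg := dG1 t tab.
  by apply: is_derive_eq; rewrite !subr0 -[m *: _]/(m * 1) mulr1.
have H1ge0 t : a <= t <= b -> 0 <= H1 t.
  move=> /andP[a_le_t tb]; have := is_derive_ge0_ndecr dH1 _ (lexx a) a_le_t tb.
  by rewrite /H1 !subrr mulr0 subr0; apply => s /mG2; rewrite subr_ge0.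
pose H t := G t - G a - G1 a * (t - a) - m / 2 * (t - a) ^+ 2.
have dH t : a <= t <= b -> is_derive t 1 H (H1 t).
  move=> tab; have dg := dG t tab.
  by apply: is_derive_eq; rewrite /H1 /GRing.scale /=; field.
have := is_derive_ge0_ndecr dH H1ge0 (lexx a) ab (lexx b).
rewrite /H !subrr mulr0 expr0n /= mulr0 !subr0 subr_ge0.
by rewrite mulrAC.
Qed.

Lemma taylor2_le (G G1 G2 : R -> R) (a b M : R) : a <= b ->
  (forall t, a <= t <= b -> is_derive t 1 G (G1 t)) ->
  (forall t, a <= t <= b -> is_derive t 1 G1 (G2 t)) ->
  (forall t, a <= t <= b -> G2 t <= M) ->
  G b - G a - G1 a * (b - a) <= M * (b - a) ^+ 2 / 2.
Proof.
move=> ab dG dG1 G2M.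
have NG2M t : a <= t <= b -> - M <= (- G2) t by move=> /G2M; rewrite fctE lerN2.
have := taylor2_ge ab (fun t tab => is_deriveN (dG t tab))
  (fun t tab => is_deriveN (dG1 t tab)) NG2M.
rewrite !fctE; lra.
Qed.
End Taylor.

Section Phi.
Variables (R : realType) (alpha : R).

(* [phi] is the summand of [- Salpha] and [dphi] its derivative. *)
Definition phi (x : R) : R :=
  if alpha == 0 then - ln x else if alpha == 1 then x * ln x
  else - (x `^ alpha / (alpha * (1 - alpha))).

Definition dphi (x : R) : R :=
  if alpha == 1 then ln x + 1 else x `^ (alpha - 1) / (alpha - 1).

Lemma is_derive_phi (x : R) : 0 < x -> is_derive x 1 phi (dphi x).
Proof.
move=> x0; rewrite /phi /dphi.
have [->|a0] := eqVneq alpha 0.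
  rewrite eq_sym oner_eq0.
  apply: (is_derive_eq (is_deriveN (is_derive1_ln x0))).
  by rewrite sub0r powR_inv1 ?ltW // invrN invr1 mulrN1.
have [a1|a1] := eqVneq alpha 1.
  apply: (is_derive_eq (is_deriveM (is_derive_id x 1) (is_derive1_ln x0))).
  rewrite -[x *: _]/(x * x^-1) -[ln x *: _]/(ln x * 1) divff ?gt_eqF //.
  by rewrite mulr1 addrC.
have -> : (fun x : R => - (x `^ alpha / (alpha * (1 - alpha)))) =
    - ((alpha * (1 - alpha))^-1 \*: (fun y : R => y `^ alpha)).
  by apply/funext => y; rewrite /= /GRing.scale /= mulrC.
apply: (is_derive_eq (is_deriveN (is_deriveZ _ (is_derive1_powR alpha x0)))).
rewrite -[_ *: _]/((alpha * (1 - alpha))^-1 * (alpha * x `^ (alpha - 1))).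
have oneB_neq0 : 1 - alpha != 0 by rewrite subr_eq0 eq_sym.
have Bone_neq0 : alpha - 1 != 0 by rewrite subr_eq0.
by field; rewrite a0 oneB_neq0 Bone_neq0.
Qed.

Lemma is_derive_dphi (x : R) : 0 < x -> is_derive x 1 dphi (x `^ (alpha - 2)).
Proof.
move=> x0; rewrite /dphi.
have [a1|a1] := eqVneq alpha 1.
  have -> : (fun x : R => ln x + 1) = @ln R + cst 1 by [].
  apply: (is_derive_eq (is_deriveD (is_derive1_ln x0) (is_derive_cst _ _ _))).
  have -> : alpha - 2 = -1 by rewrite a1; lra.
  by rewrite powR_inv1 ?ltW // addr0.
have -> : (fun x : R => x `^ (alpha - 1) / (alpha - 1)) =
    (alpha - 1)^-1 \*: (fun y : R => y `^ (alpha - 1)).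
  by apply/funext => y; rewrite /= /GRing.scale /= mulrC.
apply: (is_derive_eq (is_deriveZ _ (is_derive1_powR (alpha - 1) x0))).
rewrite -[_ *: _]/((alpha - 1)^-1 * ((alpha - 1) * x `^ (alpha - 1 - 1))).
rewrite mulrA mulVf ?subr_eq0 // mul1r; congr (_ `^ _); lra.
Qed.

Variable K : nat.
Implicit Types (p q v gamma : 'I_K -> R).

Definition hessian_form gamma v : R := \sum_(k < K) v k ^+ 2 * gamma k `^ (alpha - 2).

Lemma Salpha_phi p : Salpha alpha p = - \sum_(k < K) phi (p k).
Proof.
rewrite /Salpha /phi; have [_|a0] := eqVneq alpha 0.
  by rewrite -sumrN; apply: eq_bigr => k _; rewrite opprK.
have [_|a1] := eqVneq alpha 1; first by rewrite -sumrN.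
by rewrite mulr_suml -sumrN; apply: eq_bigr => k _; rewrite opprK.
Qed.

Lemma gradS_dphi q k : 0 < q k -> gradS alpha q k = - dphi (q k).
Proof.
move=> qk_gt0; rewrite /gradS.
have -> : (fun t => Salpha alpha (fun j => if j == k then q j + t else q j)) =
    (fun t => - ((phi \o shift (q k)) t + \sum_(j < K | j != k) phi (q j))).
  apply/funext => t; rewrite Salpha_phi (bigD1 k) //= eqxx [q k + t]addrC.
  by congr (- (_ + _)); apply: eq_bigr => j /negbTE ->.
have : is_derive (0 : R) 1 (phi \o shift (q k)) (dphi (q k) * 1).
  by apply: is_derive1_comp; [rewrite /= add0r; exact: is_derive_phi | exact: is_derive_shift].
by move=> dphik; rewrite derive1E derive_val mulr1 addr0.
Qed.

Lemma Dalpha_phi p q : (forall k, 0 < q k) ->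
  Dalpha alpha p q = \sum_(k < K) (phi (p k) - phi (q k) - dphi (q k) * (p k - q k)).
Proof.
move=> q_gt0; rewrite /Dalpha !Salpha_phi opprK !sumrB.
congr (_ + _); rewrite -sumrN; apply: eq_bigr => k _.
by rewrite gradS_dphi // mulNr.
Qed.
End Phi.

Section Segment.
Variables (R : realType) (alpha : R) (K : nat) (q v : 'I_K -> R).

Lemma is_derive_sum_along (F F' : 'I_K -> R -> R) (t : R) :
  (forall k, is_derive (q k + t * v k) 1 (F k) (F' k (q k + t * v k))) ->
  is_derive t 1 (fun t => \sum_(k < K) F k (q k + t * v k))
    (\sum_(k < K) F' k (q k + t * v k) * v k).
Proof.
move=> dF; have -> : (fun t => \sum_(k < K) F k (q k + t * v k)) =
    \sum_(k < K) (F k \o (fun t => q k + t * v k)).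
  by apply/funext => y; rewrite fct_sumE.
apply: is_derive_sum => k.
exact: (@is_derive1_comp _ (F k) (fun t => q k + t * v k) _ _ _ (dF k)
  (is_derive_affine _ _ _)).
Qed.

Lemma is_derive_phi_along (t : R) : (forall k, 0 < q k + t * v k) ->
  is_derive t 1 (fun t => \sum_(k < K) phi alpha (q k + t * v k))
    (\sum_(k < K) v k * dphi alpha (q k + t * v k)).
Proof.
move=> pos; apply: is_derive_eq (is_derive_sum_along (F := fun=> phi alpha)
  (F' := fun=> dphi alpha) (fun k => is_derive_phi alpha (pos k))) _.
by apply: eq_bigr => k _; rewrite mulrC.
Qed.

Lemma is_derive_dphi_along (t : R) : (forall k, 0 < q k + t * v k) ->
  is_derive t 1 (fun t => \sum_(k < K) v k * dphi alpha (q k + t * v k))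
    (hessian_form alpha (fun k => q k + t * v k) v).
Proof.
move=> pos; apply: is_derive_eq (is_derive_sum_along
  (F := fun k x => v k * dphi alpha x) (F' := fun k x => v k * x `^ (alpha - 2))
  (fun k => is_deriveZ (v k) (is_derive_dphi alpha (pos k)))) _.
by apply: eq_bigr => k _; rewrite mulrAC expr2.
Qed.

Lemma hessian_form_along_continuous (t : R) : (forall k, 0 < q k + t * v k) ->
  {for t, continuous (fun t : R => hessian_form alpha (fun k => q k + t * v k) v)}.
Proof.
move=> pos; apply: is_derive_continuous (is_derive_sum_along
  (F := fun k x => v k ^+ 2 * x `^ (alpha - 2))
  (F' := fun k x => v k ^+ 2 *: ((alpha - 2) * x `^ (alpha - 2 - 1)))
  (fun k => is_deriveZ (v k ^+ 2) (is_derive1_powR (alpha - 2) (pos k)))).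
Qed.

(* The [0 * v k] and [s - 0] make the right-hand side literally the remainder
   of [taylor2_ge] and [taylor2_le] with [a = 0] and [b = s]. *)
Lemma Dalpha_along (s : R) : (forall k, 0 < q k) ->
  Dalpha alpha (fun k => q k + s * v k) q =
  \sum_(k < K) phi alpha (q k + s * v k) - \sum_(k < K) phi alpha (q k + 0 * v k)
  - (\sum_(k < K) v k * dphi alpha (q k + 0 * v k)) * (s - 0).
Proof.
move=> q_gt0; rewrite Dalpha_phi // !big_split /= subr0 mulr_suml.
congr (_ + _ + _); rewrite -sumrN; apply: eq_bigr => k _; rewrite mul0r addr0 //.
by rewrite addrC addKr; ring.
Qed.

Hypothesis (s : R) (s_ge0 : 0 <= s).
Hypothesis along_pos : forall t, 0 <= t <= s -> forall k, 0 < q k + t * v k.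

Let q_gt0 k : 0 < q k.
Proof. by have := @along_pos 0 _ k; rewrite mul0r addr0; apply; rewrite lexx s_ge0. Qed.

Lemma Dalpha_along_ge (m : R) :
  (forall t, 0 <= t <= s -> m <= hessian_form alpha (fun k => q k + t * v k) v) ->
  m * s ^+ 2 / 2 <= Dalpha alpha (fun k => q k + s * v k) q.
Proof.
move=> mH; rewrite Dalpha_along //.
have := taylor2_ge s_ge0 (fun t ts => is_derive_phi_along (@along_pos t ts))
  (fun t ts => is_derive_dphi_along (@along_pos t ts)) mH.
by rewrite subr0.
Qed.

Lemma Dalpha_along_le (M : R) :
  (forall t, 0 <= t <= s -> hessian_form alpha (fun k => q k + t * v k) v <= M) ->
  Dalpha alpha (fun k => q k + s * v k) q <= M * s ^+ 2 / 2.
Proof.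
move=> HM; rewrite Dalpha_along //.
have := taylor2_le s_ge0 (fun t ts => is_derive_phi_along (@along_pos t ts))
  (fun t ts => is_derive_dphi_along (@along_pos t ts)) HM.
by rewrite subr0.
Qed.
End Segment.

Section Simplex.
Variables (R : realType) (K : nat).
Implicit Types (p q v x : 'I_K -> R).

Lemma norm1_scale (c : R) x : norm1 (fun k => c * x k) = `|c| * norm1 x.
Proof. by rewrite /norm1 mulr_sumr; apply: eq_bigr => k _; rewrite normrM. Qed.

Lemma norm1_gt0 x : x <> (fun=> 0) -> 0 < norm1 x.
Proof.
move=> x0; rewrite lt_def sumr_ge0 // andbT; apply: contra_notN x0.
move=> /eqP /psumr_eq0P-/(_ (fun k _ => normr_ge0 (x k))) x0.
by apply/funext => k; apply/normr0_eq0/x0.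
Qed.

Lemma TK_normalize x : \sum_(k < K) x k = 0 -> x <> (fun=> 0) ->
  TK (fun k => x k / norm1 x).
Proof.
move=> x_sum0 /norm1_gt0 x_gt0; split; last by rewrite -mulr_suml x_sum0 mul0r.
have -> : (fun k => x k / norm1 x) = (fun k => (norm1 x)^-1 * x k).
  by apply/funext => k; rewrite mulrC.
by rewrite norm1_scale gtr0_norm ?invr_gt0 // mulVf ?gt_eqF.
Qed.

Lemma relint_simplex_shift q v (t : R) : relint_simplex q -> \sum_(k < K) v k = 0 ->
  (forall k, 0 < q k + t * v k < 1) -> relint_simplex (fun k => q k + t * v k).
Proof.
move=> [_ [q_sum1 _]] v_sum0 qtv01; split; last split => //.
  by move=> k; have /andP[? ?] := qtv01 k; rewrite !ltW.
by rewrite big_split /= -mulr_sumr q_sum1 v_sum0 mulr0 addr0.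
Qed.

Lemma relint_simplex_along q v (s t : R) : relint_simplex q -> \sum_(k < K) v k = 0 ->
  relint_simplex (fun k => q k + s * v k) -> 0 <= t <= s ->
  relint_simplex (fun k => q k + t * v k).
Proof.
move=> qS v_sum0 [_ [_ qsv01]] /andP[t_ge0 ts]; apply: relint_simplex_shift => // k.
have [_ [_ /(_ k) /andP[q0 q1]]] := qS; have /andP[qs0 qs1] := qsv01 k.
have [t0|t_gt0] := eqVneq t 0; first by rewrite t0 mul0r addr0 q0 q1.
have s_gt0 : 0 < s by apply: lt_le_trans ts; rewrite lt_def t_gt0.
apply/andP; split; nra.
Qed.
End Simplex.

Section Bounds.
Variables (R : realType) (alpha : R) (K : nat).
Implicit Types (p q v gamma : 'I_K -> R).

Definition hessian_inf : \bar R := ereal_inf [set x | exists v gamma,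
  [/\ TK v, relint_simplex gamma & x = (hessian_form alpha gamma v)%:E]].

Lemma exists_short_segment gamma v (e : R) : relint_simplex gamma -> \sum_(k < K) v k = 0 ->
  0 < e -> exists2 s, 0 < s & forall t, 0 <= t <= s ->
    relint_simplex (fun k => gamma k + t * v k) /\
    hessian_form alpha (fun k => gamma k + t * v k) v <= hessian_form alpha gamma v + e.
Proof.
move=> gS v_sum0 e_gt0; have [_ [_ g01]] := gS.
have g0 k : 0 < gamma k + 0 * v k by rewrite mul0r addr0; case/andP: (g01 k).
have near_hess : \forall t \near 0,
    hessian_form alpha (fun k => gamma k + t * v k) v < hessian_form alpha gamma v + e.
  apply: (cvgr_lt _ (hessian_form_along_continuous g0)).
  have -> : (fun k => gamma k + 0 * v k) = gamma by apply/funext => k; rewrite mul0r addr0.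
  by rewrite ltrDl.
have near_01 : \forall t \near 0, forall k, 0 < gamma k + t * v k < 1.
  apply: (@filter_forall R 'I_K (fun k t => 0 < gamma k + t * v k < 1) (nbhs (0:R)) _) => k.
  have /andP[gk0 gk1] := g01 k.
  have gkv := is_derive_continuous (is_derive_affine (gamma k) (v k) 0).
  have near0 := cvgr_gt _ gkv 0 (ltac:(by rewrite /= mul0r addr0)).
  have near1 := cvgr_lt _ gkv 1 (ltac:(by rewrite /= mul0r addr0)).
  by near=> t; apply/andP; split; [near: t; exact: near0 | near: t; exact: near1].
have [d /= d_gt0 hd] := nbhs_norm0P.1 (filterI near_hess near_01).
exists (d / 2) => [|t /andP[t_ge0 td]]; first by rewrite divr_gt0.
have [/ltW hess_lt gtv01] : hessian_form alpha (fun k => gamma k + t * v k) v <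
    hessian_form alpha gamma v + e /\ forall k, 0 < gamma k + t * v k < 1.
  by apply: hd; rewrite /= ger0_norm //; lra.
by split => //; exact: relint_simplex_shift.
Unshelve. all: end_near.
Qed.

Lemma hessian_inf_le_along q v (s t : R) : relint_simplex q -> TK v ->
  relint_simplex (fun k => q k + s * v k) -> 0 <= t <= s ->
  (hessian_inf <= (hessian_form alpha (fun k => q k + t * v k) v)%:E)%E.
Proof.
move=> qS vT qsvS ts; apply: ereal_inf_lbound.
exists v, (fun k => q k + t * v k); split => //.
exact: relint_simplex_along qS vT.2 qsvS ts.
Qed.

Lemma hessian_inf_le_ratio p q : relint_simplex p -> relint_simplex q -> p <> q ->
  ((2^-1)%:E * hessian_inf <= (Dalpha alpha p q / norm1 (fun k => p k - q k) ^+ 2)%:E)%E.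
Proof.
move=> pS qS pq; set x := fun k => p k - q k; set s := norm1 x.
have x_neq0 : x <> (fun=> 0).
  move=> x0; apply: pq; apply/funext => k; apply/eqP; rewrite -subr_eq0.
  by have /= <- := congr1 (fun f => f k) x0.
have s_gt0 : 0 < s := norm1_gt0 x_neq0.
have vT : TK (fun k => x k / s).
  apply: TK_normalize x_neq0.
  by have [[_ [p1 _]] [_ [q1 _]]] := (pS, qS); rewrite sumrB p1 q1 subrr.
have pE : p = (fun k => q k + s * (x k / s)).
  by apply/funext => k; rewrite mulrC divfK ?gt_eqF // /x addrC subrK.
have psvS : relint_simplex (fun k => q k + s * (x k / s)) by rewrite -pE.
have H_le t := hessian_inf_le_along (t := t) qS vT psvS.
have pos t : 0 <= t <= s -> forall k, 0 < q k + t * (x k / s).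
  by move=> ts k; have [_ [_ /(_ k)/andP[]]] := relint_simplex_along qS vT.2 psvS ts.
case: hessian_inf H_le => [r | | ] H_le.
- have := Dalpha_along_ge (ltW s_gt0) pos H_le.
  rewrite -pE -EFinM lee_fin ler_pdivlMr ?exprn_gt0 // => Dge; lra.
- by have := H_le 0; rewrite lexx ltW //= => /(_ isT).
- by rewrite mulrNy gtr0_sg ?invr_gt0 // mul1e leNye.
Qed.

Lemma C_alpha_le_hessian_form v gamma : TK v -> relint_simplex gamma ->
  (C_alpha K alpha <= (hessian_form alpha gamma v)%:E)%E.
Proof.
move=> vT gS; apply/lee_addgt0Pr => e e_gt0.
have [s s_gt0 seg] := exists_short_segment gS vT.2 e_gt0.
set p := fun k => gamma k + s * v k.
have s_ge0 : 0 <= s := ltW s_gt0.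
have [pS _] : relint_simplex p /\ _ := seg s (ltac:(by rewrite lexx s_ge0)).
have s_eq : norm1 (fun k => p k - gamma k) = s.
  have -> : (fun k => p k - gamma k) = (fun k => s * v k).
    by apply/funext => k; rewrite /p addrC addKr.
  by rewrite norm1_scale gtr0_norm // vT.1 mulr1.
have p_neq : p <> gamma.
  move=> pg; move: s_eq; rewrite pg /norm1 big1 => [/esym/eqP|k _]; last first.
    by rewrite subrr normr0.
  by rewrite gt_eqF.
have pos t : 0 <= t <= s -> forall k, 0 < gamma k + t * v k.
  by move=> ts k; have [[_ [_ /(_ k)/andP[]]]] := seg t ts.
have D_le := Dalpha_along_le s_ge0 pos (fun t ts => (seg t ts).2).
rewrite /C_alpha; apply: le_trans (lee_wpmul2l _ (ereal_inf_lbound _)) _.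
- by rewrite lee_fin.
- by exists p, gamma; split.
rewrite -EFinM lee_fin s_eq mulrA ler_pdivrMr ?exprn_gt0 //; lra.
Qed.
End Bounds.

Theorem proposition1 (R : realType) (K : nat) (alpha : R) :
  (2 <= K)%N ->
  C_alpha K alpha =
  ereal_inf [set x : \bar R | exists v gamma : 'I_K -> R,
     [/\ TK v, relint_simplex gamma &
       x = (\sum_(k < K) v k ^+ 2 * gamma k `^ (alpha - 2))%:E]].
Proof.
move=> _; change (C_alpha K alpha = hessian_inf alpha K).
apply/le_anti/andP; split.
  apply: le_ereal_inf_tmp => _ [v [gamma [vT gS ->]]].
  exact: C_alpha_le_hessian_form.
rewrite /C_alpha -lee_pdivrMl //; apply: le_ereal_inf_tmp => _ [p [q [pS qS pq ->]]].
exact: hessian_inf_le_ratio.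
Qed.
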